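(* Let $G$ be a graph and $p$ a pendant vertex of $G$ with $N(p)=\{v\}$. Then: (1) $p$ and $v$ belong to every MDNS of $G$, and there exists an MDNS $S$ of $G$ such that $p$ and $v$ are the last two vertices of $S$; (2) if there exists an MDNS $S'$ of $G-p$ such that $v$ does not belong to $S'$, then $\tilde\gamma_{gr}^{\times 2}(G)=\tilde\gamma_{gr}^{\times 2}(G-p)+2$; otherwise $\tilde\gamma_{gr}^{\times 2}(G)=\tilde\gamma_{gr}^{\times 2}(G-p)+1$.
   Context: Graphs are finite, simple, undirected; $N[v]$ is the closed neighborhood, $N(v)$ the open neighborhood; a pendant vertex has degree 1. A sequence $S=(v_1,\dots,v_k)$ of distinct vertices of $G$ is a double neighborhood sequence (DNS) if for each $i$ some $u\in N[v_i]$ satisfies $|\{j<i: u\in N[v_j]\}|\le 1$. A maximum double neighborhood sequence (MDNS) of $G$ is a DNS of maximum length, and $\tilde\gamma_{gr}^{\times 2}(G)$ denotes this maximum length. *)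

From mathcomp Require Import all_boot.
Set Implicit Arguments. Unset Strict Implicit. Unset Printing Implicit Defensive.

(* A simple graph on vertex set V : {set T}, adjacency e : rel T
   (assumed symmetric and irreflexive in the theorem); only vertices of V
   and edges between them are considered (induced subgraph on V). *)
Section DNS.
Variables (T : finType) (V : {set T}) (e : rel T).

Definition cnbhd (v : T) : {set T} := [set u in V | (u == v) || e v u].
Definition onbhd (v : T) : {set T} := [set u in V | e v u].

Fixpoint dns_aux (pre rest : seq T) : bool :=
  match rest with
  | [::] => true
  | x :: r => [exists u in cnbhd x, count (fun w => u \in cnbhd w) pre <= 1]
              && dns_aux (rcons pre x) r
  end.

Definition is_dns (s : seq T) : bool := [&& uniq s, all (fun x => x \in V) s & dns_aux [::] s].

Definition is_mdns (s : seq T) : Prop :=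
  is_dns s /\ forall t : seq T, is_dns t -> size t <= size s.

(* gamma~_gr^{x2}: maximum length of a DNS (a DNS has length <= #|T|) *)
Definition gamma_gr2 : nat :=
  \max_(k < #|T|.+1 | [exists t : k.-tuple T, is_dns t]) k.
End DNS.

From mathcomp Require Import all_boot zify.
Set Implicit Arguments. Unset Strict Implicit. Unset Printing Implicit Defensive.

(* The pendant vertex p lies only in N[p] and N[v], so whenever a DNS of G
   contains at most one of p, v, the missing one can be appended with
   footprint p.  Hence every MDNS contains p and v.  Conversely, deleting p
   and v from a DNS of G leaves a DNS of G - p, because no remaining vertex
   sees p; this loses at most two vertices, and p, v can be appended back at
   the end.  So gamma(G) = |S0| + 2 for some DNS S0 of G - p avoiding v, while
   every MDNS S' of G - p extends to the DNS S' ++ [p] of G, or S' ++ [p; v]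
   when v is not in S'. *)

Section DoubleNeighborhoodSequences.
Variables (T : finType) (e : rel T).
Implicit Types (V W : {set T}) (s pre r : seq T).

Definition dom_count V s (u : T) : nat := count (fun w => u \in cnbhd V e w) s.

Lemma dns_aux_cons V pre x r :
  dns_aux V e pre (x :: r) =
  [exists u in cnbhd V e x, dom_count V pre u <= 1] && dns_aux V e (rcons pre x) r.
Proof. by []. Qed.

Lemma dns_aux_cat V pre r s :
  dns_aux V e pre (r ++ s) = dns_aux V e pre r && dns_aux V e (pre ++ r) s.
Proof.
elim: r pre => [|x r IHr] pre /=; first by rewrite cats0.
by rewrite IHr -cat_rcons andbA.
Qed.

Lemma is_dns_rcons V s x :
  is_dns V e (rcons s x) =
  [&& is_dns V e s, x \in V, x \notin s
    & [exists u in cnbhd V e x, dom_count V s u <= 1]].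
Proof.
rewrite /is_dns rcons_uniq all_rcons -cats1 dns_aux_cat /= andbT -!andbA.
by do !bool_congr.
Qed.

Lemma dns_notin V s x : is_dns V e s -> x \notin V -> x \notin s.
Proof. by case/and3P=> _ /allP sV _; apply: contra => /sV. Qed.

Lemma dns_aux_filter V (P : pred T) pre pre' r :
  (forall u, dom_count V pre' u <= dom_count V pre u) ->
  dns_aux V e pre r -> dns_aux V e pre' (filter P r).
Proof.
elim: r pre pre' => [|x r IHr] pre pre' // le_pre.
rewrite dns_aux_cons => /andP[/existsP[u /andP[ux cnt_u]] dns_r] /=.
have le_rcons y : dom_count V (rcons pre' x) y <= dom_count V (rcons pre x) y.
  by rewrite /dom_count -!cats1 !count_cat leq_add2r le_pre.
case: (P x); last first.
  apply: IHr dns_r => y; apply: leq_trans (le_rcons y).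
  by rewrite /dom_count -cats1 count_cat leq_addr.
rewrite dns_aux_cons (IHr _ _ le_rcons dns_r) andbT.
by apply/existsP; exists u; rewrite ux (leq_trans (le_pre u)).
Qed.

Lemma is_dns_filter V (P : pred T) s : is_dns V e s -> is_dns V e (filter P s).
Proof.
case/and3P=> uniq_s sV dns_s; apply/and3P; split.
- exact: filter_uniq.
- by apply/allP=> x; rewrite mem_filter => /andP[_ /(allP sV)].
- exact: dns_aux_filter dns_s.
Qed.

Lemma cnbhd_subset V W x : V \subset W -> cnbhd V e x = V :&: cnbhd W e x.
Proof.
move=> sVW; apply/setP=> u; rewrite !inE.
by case uV: (u \in V); rewrite //= (subsetP sVW).
Qed.

Lemma dom_count_subset V W s u :
  V \subset W -> u \in V -> dom_count V s u = dom_count W s u.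
Proof.
by move=> sVW uV; apply: eq_count => w; rewrite (cnbhd_subset _ sVW) inE uV.
Qed.

Lemma dns_aux_subset V W pre r :
  V \subset W -> dns_aux V e pre r -> dns_aux W e pre r.
Proof.
move=> sVW; elim: r pre => [|x r IHr] pre //.
rewrite !dns_aux_cons => /andP[/existsP[u /andP[ux cnt_u]] dns_r].
have uV : u \in V by move: ux; rewrite inE => /andP[].
rewrite IHr // andbT; apply/existsP; exists u.
move: ux; rewrite (cnbhd_subset _ sVW) inE => /andP[_ ->].
by rewrite -(dom_count_subset _ sVW uV).
Qed.

Lemma is_dns_subset V W s : V \subset W -> is_dns V e s -> is_dns W e s.
Proof.
move=> sVW /and3P[uniq_s /allP sV dns_s]; apply/and3P; split=> //.
- by apply/allP=> x /sV/(subsetP sVW).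
- exact: dns_aux_subset dns_s.
Qed.

Lemma dns_aux_restrict V W pre r :
  V \subset W -> {in r, forall x, cnbhd W e x \subset V} ->
  dns_aux W e pre r -> dns_aux V e pre r.
Proof.
move=> sVW; elim: r pre => [|x r IHr] pre // sNV.
rewrite !dns_aux_cons => /andP[/existsP[u /andP[ux cnt_u]] dns_r].
have uV : u \in V by apply: subsetP ux; apply: sNV; rewrite inE eqxx.
rewrite IHr // => [|y yr]; last by apply: sNV; rewrite inE yr orbT.
rewrite andbT; apply/existsP; exists u.
by rewrite (cnbhd_subset _ sVW) inE uV ux (dom_count_subset _ sVW uV).
Qed.

Lemma is_dns_restrict V W s :
  V \subset W -> {in s, forall x, cnbhd W e x \subset V} ->
  is_dns W e s -> is_dns V e s.
Proof.
move=> sVW sNV /and3P[uniq_s /allP sW dns_s]; apply/and3P; split=> //.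
- apply/allP=> x xs; apply: subsetP (sNV x xs) _ _.
  by rewrite inE sW ?eqxx.
- exact: dns_aux_restrict dns_s.
Qed.

Lemma dns_size_le_gamma V s : is_dns V e s -> size s <= gamma_gr2 V e.
Proof.
move=> dns_s; have lt_s : size s < #|T|.+1.
  by case/and3P: dns_s => uniq_s _ _; rewrite ltnS -(card_uniqP uniq_s) max_card.
apply: (@leq_bigmax_cond _ _ (fun k : 'I_#|T|.+1 => nat_of_ord k) (Ordinal lt_s)).
by apply/existsP; exists (in_tuple s).
Qed.

Lemma exists_dns_size_gamma V : exists2 s, is_dns V e s & size s = gamma_gr2 V e.
Proof.
pose A := [pred k : 'I_#|T|.+1 | [exists t : k.-tuple T, is_dns V e t]].
have A0 : 0 < #|A| by apply/card_gt0P; exists ord0; apply/existsP; exists [tuple].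
have [k /existsP[t dns_t] gammaE] :=
  eq_bigmax_cond (fun k : 'I_#|T|.+1 => nat_of_ord k) A0.
by exists t; rewrite // size_tuple /gamma_gr2 gammaE.
Qed.

Lemma is_mdnsE V s : is_mdns V e s <-> is_dns V e s /\ size s = gamma_gr2 V e.
Proof.
split=> [[dns_s max_s] | [dns_s size_s]]; last first.
  by split=> // t; rewrite size_s; apply: dns_size_le_gamma.
split=> //; apply/eqP; rewrite eqn_leq dns_size_le_gamma //=.
by have [t dns_t <-] := exists_dns_size_gamma V; apply: max_s.
Qed.

End DoubleNeighborhoodSequences.

Section PendantVertex.
Variables (T : finType) (e : rel T).
Hypotheses (e_sym : symmetric e) (e_irr : irreflexive e).
Variables (p v : T).
Hypothesis p_pendant : onbhd [set: T] e p = [set v].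

Lemma pendant_adj x : e p x = (x == v).
Proof. by have /setP/(_ x) := p_pendant; rewrite !inE. Qed.

Lemma pendant_neq : p != v.
Proof. by apply/eqP=> pv; have := e_irr p; rewrite {2}pv pendant_adj eqxx. Qed.

Lemma pendant_in_cnbhd w : (p \in cnbhd [set: T] e w) = (w \in [:: p; v]).
Proof. by rewrite !inE e_sym pendant_adj eq_sym. Qed.

Lemma dom_count_pendant s :
  dom_count e [set: T] s p = count_mem p s + count_mem v s.
Proof.
elim: s => //= w s IHs; rewrite pendant_in_cnbhd -/(dom_count _ _ _ _) IHs !inE.
case: (eqVneq w p) => [-> | _]; last by rewrite addnCA.
by rewrite (negbTE pendant_neq) addnA.
Qed.

Lemma dns_rcons_pendant s x :
  is_dns [set: T] e s -> x \in [:: p; v] -> x \notin s ->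
  (p \in s) + (v \in s) <= 1 -> is_dns [set: T] e (rcons s x).
Proof.
move=> dns_s xpv xs cnt_s; rewrite is_dns_rcons dns_s in_setT xs /=.
apply/existsP; exists p; rewrite pendant_in_cnbhd xpv dom_count_pendant.
by case/and3P: dns_s => uniq_s _ _; rewrite !count_uniq_mem.
Qed.

Lemma dns_cat_pendant s :
  is_dns [set: T] e s -> p \notin s -> v \notin s ->
  is_dns [set: T] e (s ++ [:: p; v]).
Proof.
move=> dns_s ps vs; rewrite -cat_rcons cats1.
have vsp : v \notin rcons s p by rewrite mem_rcons inE eq_sym (negbTE pendant_neq).
apply: dns_rcons_pendant; rewrite ?inE ?eqxx ?orbT //.
  by apply: dns_rcons_pendant; rewrite ?inE ?eqxx ?(negbTE ps) ?(negbTE vs).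
by rewrite mem_rcons mem_head (negbTE vsp).
Qed.

Lemma mdns_mem_pendant S : is_mdns [set: T] e S -> p \in S /\ v \in S.
Proof.
move=> [dns_S max_S]; suff memS x : x \in [:: p; v] -> x \in S.
  by rewrite !memS ?inE ?eqxx ?orbT.
move=> xpv; apply: contraT => xS.
have : size (rcons S x) <= size S.
  apply/max_S/dns_rcons_pendant => //.
  by move: xpv xS; rewrite !inE => /orP[]/eqP-> /negbTE->; case: (_ \in S).
by rewrite size_rcons ltnn.
Qed.

Lemma dns_delete_pendant s :
  is_dns [set: T] e s -> is_dns [set~ p] e [seq w <- s | w \notin [:: p; v]].
Proof.
move=> dns_s; apply: (is_dns_restrict (subsetT _) _ (is_dns_filter _ dns_s)).
move=> x; rewrite mem_filter => /andP[xpv _]; apply/subsetP=> u ux.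
by rewrite in_setC1; apply: contraNneq xpv => up; rewrite -pendant_in_cnbhd -up.
Qed.

Lemma exists_mdns_pendant_last :
  exists S0, [/\ is_dns [set~ p] e S0, v \notin S0
               & is_mdns [set: T] e (S0 ++ [:: p; v])].
Proof.
have [t dns_t size_t] := exists_dns_size_gamma e [set: T].
set S0 := [seq w <- t | w \notin [:: p; v]].
have dns_S : is_dns [set: T] e (S0 ++ [:: p; v]).
  by apply: dns_cat_pendant; rewrite ?is_dns_filter // mem_filter !inE eqxx ?orbT.
exists S0; split; rewrite ?dns_delete_pendant ?mem_filter ?inE ?eqxx ?orbT //.
apply/is_mdnsE; split=> //; apply/eqP; rewrite eqn_leq dns_size_le_gamma //= -size_t.
case/and3P: dns_t => uniq_t _ _; apply: uniq_leq_size uniq_t _ => w wt.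
by rewrite mem_cat mem_filter wt andbT orNb.
Qed.

Lemma gamma_pendant_ge S' :
  is_mdns [set~ p] e S' ->
  gamma_gr2 [set~ p] e + 1 + (v \notin S') <= gamma_gr2 [set: T] e.
Proof.
case/is_mdnsE=> dns_S' <-.
have dns_G := is_dns_subset (subsetT _) dns_S'.
have pS' : p \notin S' by apply: dns_notin dns_S' _; rewrite !inE eqxx.
have [vS'|vS'] := boolP (v \in S').
  have := dns_size_le_gamma (dns_rcons_pendant dns_G _ pS' _).
  by rewrite size_rcons addn0 addn1 => ->; rewrite ?inE ?eqxx ?vS' ?(negbTE pS').
by have := dns_size_le_gamma (dns_cat_pendant dns_G pS' vS'); rewrite size_cat -addnA.
Qed.

End PendantVertex.

Theorem proposition3 (T : finType) (e : rel T)
  (e_sym : symmetric e) (e_irr : irreflexive e) (p v : T)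
  (hpend : onbhd [set: T] e p = [set v]) :
  ((forall S, is_mdns [set: T] e S -> p \in S /\ v \in S) /\
   (exists S, is_mdns [set: T] e S /\ exists S0, S = S0 ++ [:: p; v])) /\
  ((exists S', is_mdns [set~ p] e S' /\ v \notin S') ->
     gamma_gr2 [set: T] e = gamma_gr2 [set~ p] e + 2) /\
  (~ (exists S', is_mdns [set~ p] e S' /\ v \notin S') ->
     gamma_gr2 [set: T] e = gamma_gr2 [set~ p] e + 1).
Proof.
have [S0 [dns_S0 vS0 mdns_S]] := exists_mdns_pendant_last e_sym e_irr hpend.
have [_ gammaE] := (is_mdnsE _ _ _).1 mdns_S; rewrite size_cat /= in gammaE.
have S0_le := dns_size_le_gamma dns_S0.
have gamma_ge := gamma_pendant_ge e_sym e_irr hpend.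
split; [split|split].
- exact: mdns_mem_pendant.
- by exists (S0 ++ [:: p; v]); split; last exists S0.
- case=> S' [/gamma_ge ge_S' vS']; move: ge_S'; rewrite vS' -gammaE; lia.
- move=> noS'; have [S' dns_S' size_S'] := exists_dns_size_gamma e [set~ p].
  have /gamma_ge : is_mdns [set~ p] e S' by exact/is_mdnsE.
  have : size S0 != gamma_gr2 [set~ p] e.
    by apply: contra_notN noS' => /eqP S0E; exists S0; split=> //; exact/is_mdnsE.
  by rewrite -gammaE; lia.
Qed.
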